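(* Let $\mathcal{X}\subset\mathbb{R}^d$ be bounded, let $\mathcal{M}_f$ be a set of finite (nonzero) measures on $\mathcal{X}$, set $\mathcal{F}:=\{\Lambda^*\mid\Lambda\in\mathcal{M}_f\}$, and let $S':\mathcal{F}\times\mathcal{X}\to\mathbb{R}$ be a (strictly) consistent scoring function for $\mathrm{id}_{\mathcal{F}}$. Define $S:\mathcal{F}\times\mathbb{M}_0\to\mathbb{R}$ by $$S(\Lambda^*,\{y_1,\dots,y_n\}):=\sum_{i=1}^n S'(\Lambda^*,y_i)$$ for $n\in\mathbb{N}$ and $S(\Lambda^*,\emptyset)=0$. Then $S$ is consistent for the normalized intensity measure, i.e. for every finite point process $\Phi$ on $\mathcal{X}$ with intensity measure $\Lambda\in\mathcal{M}_f$ (for which the expected scores exist) and every $Q\in\mathcal{M}_f$, $\mathbb{E}S(Q^*,\Phi)\ge\mathbb{E}S(\Lambda^*,\Phi)$. It is strictly consistent (equality forces $Q^*=\Lambda^*$) if $S'$ is strictly consistent.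
   Context: $\mathbb{M}_0$ denotes the space of finite counting measures on $\mathcal{X}$; a realization is written as the set of its points $\{y_1,\dots,y_n\}$. For a finite measure $\Lambda$ on $\mathcal{X}$, $|\Lambda|:=\Lambda(\mathcal{X})$ and $\Lambda^*:=\Lambda/|\Lambda|$ is its normalized measure. The intensity measure of $\Phi$ is $\Lambda(B)=\mathbb{E}\Phi(B)$. A scoring function $S'$ on $\mathcal{F}\times\mathcal{X}$ is consistent for $\mathrm{id}_{\mathcal{F}}$ if $S'(G,\cdot)$ is $F$-integrable and $\int S'(G,x)\,dF(x)\ge\int S'(F,x)\,dF(x)$ for all $F,G\in\mathcal{F}$; strictly consistent if equality implies $G=F$. *)

From HB Require Import structures.
From mathcomp Require Import all_boot all_order all_algebra.
From mathcomp Require Import all_classical all_reals all_analysis.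
Set Implicit Arguments. Unset Strict Implicit. Unset Printing Implicit Defensive.
Import Order.TTheory GRing.Theory Num.Theory.
Local Open Scope classical_set_scope.
Local Open Scope ring_scope.
Local Open Scope ereal_scope.

(* The ambient space R^n, with its (product = Borel) sigma-algebra. *)
Notation Rn R n := (n.-tuple R) (only parsing).

Definition origin (R : realType) (n : nat) : Rn R n := [tuple of nseq n 0%R].

Definition bounded_Rn (R : realType) (n : nat) (X : set (Rn R n)) : Prop :=
  exists M : R, forall x, X x -> forall i : 'I_n, (`|tnth x i| <= M)%R.

Definition finite_nonzero_on (R : realType) (n : nat) (X : set (Rn R n))
  (L : {measure set (Rn R n) -> \bar R}) : Prop :=
  0 < L [set: Rn R n] < +oo /\ L (~` X) = 0.

(* normalized measure L^* = L / |L| (the fallback of mnormalize is only used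
   when |L| is 0 or +oo, which never happens for elements of M_f). *)
Definition normalize (R : realType) (n : nat)
  (L : {measure set (Rn R n) -> \bar R}) : probability (Rn R n) R :=
  mnormalize L (\d_(origin R n)).

Definition Fcal (R : realType) (n : nat)
  (Mf : set {measure set (Rn R n) -> \bar R}) : set (probability (Rn R n) R) :=
  [set normalize L | L in Mf].

Definition consistent (R : realType) (n : nat) (X : set (Rn R n))
  (Mf : set {measure set (Rn R n) -> \bar R})
  (S' : probability (Rn R n) R -> Rn R n -> R) : Prop :=
  forall F G, Fcal Mf F -> Fcal Mf G ->
    F.-integrable X (fun x => (S' G x)%:E) /\
    \int[F]_(x in X) (S' G x)%:E >= \int[F]_(x in X) (S' F x)%:E.

Definition strictly_consistent (R : realType) (n : nat) (X : set (Rn R n))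
  (Mf : set {measure set (Rn R n) -> \bar R})
  (S' : probability (Rn R n) R -> Rn R n -> R) : Prop :=
  consistent X Mf S' /\
  forall F G, Fcal Mf F -> Fcal Mf G ->
    \int[F]_(x in X) (S' G x)%:E = \int[F]_(x in X) (S' F x)%:E ->
    (G : set (Rn R n) -> \bar R) = F.

(* S(G, {y_1,...,y_n}) := sum_i S'(G, y_i); S(G, empty) = 0.
   A realization of a finite point process is a finite list of points
   (with multiplicities); the sum does not depend on the order. *)
Definition Sc (R : realType) (n : nat)
  (S' : probability (Rn R n) R -> Rn R n -> R)
  (G : probability (Rn R n) R) (s : seq (Rn R n)) : R :=
  (\sum_(y <- s) S' G y)%R.

Definition npoints (R : realType) (n : nat) (B : set (Rn R n)) (s : seq (Rn R n)) : nat :=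
  count (fun y => `[< B y >]) s.

Definition finite_point_process (R : realType) (n : nat) (X : set (Rn R n))
  (dO : measure_display) (Omega : measurableType dO)
  (Phi : Omega -> seq (Rn R n)) : Prop :=
  (forall w y, y \in Phi w -> X y) /\
  (forall B, measurable B -> measurable_fun [set: Omega] (fun w => (npoints B (Phi w))%:R : R)).

Definition intensity_measure (R : realType) (n : nat)
  (dO : measure_display) (Omega : measurableType dO) (P : probability Omega R)
  (Phi : Omega -> seq (Rn R n)) (L : {measure set (Rn R n) -> \bar R}) : Prop :=
  forall B, measurable B -> \int[P]_w ((npoints B (Phi w))%:R)%:E = L B.

From HB Require Import structures.
From mathcomp Require Import all_boot all_order all_algebra.
From mathcomp Require Import all_classical all_reals all_analysis.
From mathcomp Require Import measurable_realfun.
Import Order.TTheory GRing.Theory Num.Theory.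
Import HBNNSimple.
Set Implicit Arguments. Unset Strict Implicit. Unset Printing Implicit Defensive.
Local Open Scope classical_set_scope.
Local Open Scope ring_scope.
Local Open Scope ereal_scope.

(* Campbell's formula: if E Phi(B) = c mu(B) for all measurable B, then
   E sum_{y in Phi} f(y) = c \int f dmu, first for indicators (the hypothesis),
   then for simple functions by linearity, for nonnegative measurable functions
   by monotone convergence and for integrable ones by splitting into positive
   and negative parts.  With mu = Lambda^* and c = |Lambda| this turns
   E S(G, Phi) into |Lambda| \int S'(G, x) dLambda^*(x), so (strict)
   consistency of S' transfers to S after cancelling the factor |Lambda| > 0. *)

Section point_counts.
Context d (T : measurableType d) (R : realType).

(* [npoints] over an arbitrary measurable space; the two are convertible. *)
Definition count_in (B : set T) (s : seq T) : nat :=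
  count (fun y => `[< B y >]) s.

Lemma count_in_indic (B : set T) s :
  ((count_in B s)%:R : R) = (\sum_(y <- s) \1_B y)%R.
Proof.
elim: s => [|y s IH]; first by rewrite big_nil.
by rewrite big_cons /= natrD IH indicE.
Qed.

Lemma count_in_seq1 (B : set T) x : ((count_in B [:: x])%:R : R) = \1_B x.
Proof. by rewrite count_in_indic big_seq1. Qed.

Lemma sum_nnsfun_count (h : {nnsfun T >-> R}) (s : seq T) :
  \sum_(y <- s) (h y)%:E =
  \sum_(r \in range h) `|r|%:E * ((count_in (h @^-1` [set r]) s)%:R)%:E.
Proof.
have fin_h : finite_set (range h) by exact: fimfunP.
under [RHS]eq_fsbigr do rewrite -EFinM.
rewrite sumEFin fsbig_finite//= sumEFin; congr EFin.
under eq_bigr do rewrite fimfunE fsbig_finite//=.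
rewrite exchange_big /=; apply: eq_big_seq => r.
rewrite in_fset_set// inE => -[x _ <-].
by rewrite count_in_indic mulr_sumr ger0_norm.
Qed.

End point_counts.

Lemma cvg_integral_nondecreasing d (T : measurableType d) (R : realType)
    (mu : {measure set T -> \bar R}) (g_ : (T -> \bar R)^nat) (f : T -> \bar R) :
  (forall k, measurable_fun setT (g_ k)) -> (forall k x, 0 <= g_ k x) ->
  (forall x, nondecreasing_seq (g_^~ x)) -> (forall x, g_^~ x @ \oo --> f x) ->
  \int[mu]_x g_ k x @[k --> \oo] --> \int[mu]_x f x.
Proof.
move=> mg g_ge0 nd_g gf.
have := cvg_monotone_convergence (mu := mu) measurableT mg
  (fun k x _ => g_ge0 k x) (fun x _ => nd_g x).
rewrite (_ : (fun x => limn (g_^~ x)) = f) //.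
by apply/funext => x; exact/cvg_lim.
Qed.

Section campbell.
Context d (T : measurableType d) (R : realType) dO (Omega : measurableType dO).
Variables (P : probability Omega R) (mu : {measure set T -> \bar R}).
Variables (Phi : Omega -> seq T) (c : R).
Hypothesis measurable_count : forall B, measurable B ->
  measurable_fun setT (fun w => ((count_in B (Phi w))%:R : R)).
Hypothesis integral_count : forall B, measurable B ->
  \int[P]_w ((count_in B (Phi w))%:R)%:E = c%:E * mu B.

Let measurable_count_ereal B : measurable B ->
  measurable_fun setT (fun w => ((count_in B (Phi w))%:R)%:E : \bar R).
Proof. by move=> mB; apply/measurable_EFinP; exact: measurable_count. Qed.

Let measurable_count_seq1 B : measurable B ->
  measurable_fun setT (fun x : T => ((count_in B [:: x])%:R)%:E : \bar R).
Proof.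
move=> mB; apply/measurable_EFinP.
by under eq_fun do rewrite count_in_seq1; exact: measurable_indic.
Qed.

Lemma measurable_sum_nnsfun (h : {nnsfun T >-> R}) :
  measurable_fun setT (fun w => \sum_(y <- Phi w) (h y)%:E).
Proof.
have fin_h : finite_set (range h) by exact: fimfunP.
under eq_fun do rewrite sum_nnsfun_count fsbig_finite//=.
apply: emeasurable_sum => r; apply: emeasurable_funM => //.
exact: measurable_count_ereal.
Qed.

Lemma campbell_nnsfun (h : {nnsfun T >-> R}) :
  \int[P]_w (\sum_(y <- Phi w) (h y)%:E) = c%:E * \int[mu]_x (h x)%:E.
Proof.
have fin_h : finite_set (range h) by exact: fimfunP.
pose F r s := `|r|%:E * ((count_in (h @^-1` [set r]) s)%:R)%:E.
have F_ge0 r s : 0 <= F r s by rewrite mule_ge0.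
rewrite (eq_integral (fun w => \sum_(r \in range h) F r (Phi w))); last first.
  by move=> w _; rewrite sum_nnsfun_count.
rewrite [X in _ = _ * X](eq_integral (fun x => \sum_(r \in range h) F r [:: x]));
  last first.
  by move=> x _; rewrite -sum_nnsfun_count big_seq1.
rewrite !ge0_integral_fsum//; first last.
- by move=> r; apply: emeasurable_funM => //; exact: measurable_count_ereal.
- by move=> r; apply: emeasurable_funM => //; exact: measurable_count_seq1.
rewrite ge0_mule_fsumr => [|r]; last by apply: integral_ge0.
apply: eq_fsbigr => r _; rewrite !ge0_integralZl_EFin//; first last.
- exact: measurable_count_ereal.
- exact: measurable_count_seq1.
under [X in _ = _ * (_ * X)]eq_integral do rewrite count_in_seq1.
by rewrite integral_count// integral_indic// setIT muleCA.
Qed.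

Lemma measurable_sum_ge0 (g : T -> \bar R) :
  measurable_fun setT g -> (forall x, 0 <= g x) ->
  measurable_fun setT (fun w => \sum_(y <- Phi w) g y).
Proof.
move=> mg g_ge0; pose h := nnsfun_approx measurableT mg.
have hg x : EFin \o h^~ x @ \oo --> g x.
  exact: cvg_nnsfun_approx (fun x _ => g_ge0 x) x I.
apply: (emeasurable_fun_cvg (fun k w => \sum_(y <- Phi w) (h k y)%:E)).
  by move=> k; exact: measurable_sum_nnsfun.
move=> w _; apply: cvg_nnesum => y _; last exact: hg.
by apply: nearW => k; rewrite lee_fin.
Qed.

Lemma campbell_ge0 (g : T -> \bar R) :
  measurable_fun setT g -> (forall x, 0 <= g x) ->
  \int[P]_w (\sum_(y <- Phi w) g y) = c%:E * \int[mu]_x g x.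
Proof.
move=> mg g_ge0; pose h := nnsfun_approx measurableT mg.
have hg x : EFin \o h^~ x @ \oo --> g x.
  exact: cvg_nnsfun_approx (fun x _ => g_ge0 x) x I.
have nd_hx x : nondecreasing_seq (fun k => (h k x)%:E).
  by move=> m n mn; rewrite lee_fin; exact/lefP/nd_nnsfun_approx.
have int_mu : \int[mu]_x (h k x)%:E @[k --> \oo] --> \int[mu]_x g x.
  apply: cvg_integral_nondecreasing => [k|k x|x|x].
  - exact/measurable_EFinP.
  - by rewrite lee_fin.
  - exact: nd_hx.
  - exact: hg.
have int_P : \int[P]_w (\sum_(y <- Phi w) (h k y)%:E) @[k --> \oo] -->
    \int[P]_w (\sum_(y <- Phi w) g y).
  apply: cvg_integral_nondecreasing => [k|k w|w m n mn|w].
  - exact: measurable_sum_nnsfun.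
  - by apply: sume_ge0 => y _; rewrite lee_fin.
  - by apply: lee_sum => y _; exact: nd_hx.
  - apply: cvg_nnesum => y _; last exact: hg.
    by apply: nearW => k; rewrite lee_fin.
rewrite (_ : (fun k => _) = (fun k => c%:E * \int[mu]_x (h k x)%:E)) in int_P.
  exact: cvg_unique _ int_P (cvgeZl (y := c%:E) isT int_mu).
by apply/funext => k; exact: campbell_nnsfun.
Qed.

Lemma integrable_sum_ge0 (g : T -> \bar R) :
  measurable_fun setT g -> (forall x, 0 <= g x) -> \int[mu]_x g x < +oo ->
  P.-integrable setT (fun w => \sum_(y <- Phi w) g y).
Proof.
move=> mg g_ge0 g_fin; apply/integrableP; split; first exact: measurable_sum_ge0.
under eq_integral do rewrite gee0_abs ?sume_ge0//.
rewrite campbell_ge0// ltey_eq fin_numM//.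
by rewrite ge0_fin_numE// integral_ge0.
Qed.

Theorem campbell (X : set T) (f : T -> R) : measurable X ->
  (forall w y, y \in Phi w -> X y) -> mu.-integrable X (EFin \o f) ->
  \int[P]_w (\sum_(y <- Phi w) f y)%:E = c%:E * \int[mu]_(x in X) (f x)%:E.
Proof.
move=> mX PhiX fi.
pose F := (EFin \o f) \_ X.
have {}fi : mu.-integrable setT F by exact/(integrable_mkcond _ mX).
have mF : measurable_fun setT F := measurable_int _ fi.
have Fneg_fin y : F^\- y \is a fin_num.
  rewrite funenegE /F /patch.
  by case: ifP => _; rewrite /= -?EFinN ?oppe0 -?EFin_max.
have sum_split w : (\sum_(y <- Phi w) f y)%:E =
    \sum_(y <- Phi w) F^\+ y - \sum_(y <- Phi w) F^\- y.
  rewrite -sumEFin -fin_num_sumeN // -big_split /= big_seq [RHS]big_seq.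
  apply: eq_bigr => y /PhiX Xy.
  transitivity (F y); first by rewrite /F patchT // inE.
  by rewrite {1}(funeposneg F).
rewrite (eq_integral (fun w =>
    \sum_(y <- Phi w) F^\+ y - \sum_(y <- Phi w) F^\- y)); last first.
  by move=> w _; exact: sum_split.
rewrite integralB //; first last.
- apply: (integrable_sum_ge0 (measurable_funeneg mF) (funeneg_ge0 F)).
  by rewrite -ge0_fin_numE ?integral_ge0 //; exact: integrable_neg_fin_num.
- apply: (integrable_sum_ge0 (measurable_funepos mF) (funepos_ge0 F)).
  by rewrite -ge0_fin_numE ?integral_ge0 //; exact: integrable_pos_fin_num.
rewrite (campbell_ge0 (measurable_funepos mF) (funepos_ge0 F)).
rewrite (campbell_ge0 (measurable_funeneg mF) (funeneg_ge0 F)).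
rewrite -muleBr //; last exact/fin_num_adde_defr/integrable_pos_fin_num.
by rewrite -integralE -integral_mkcond.
Qed.

End campbell.

Lemma mnormalizeE d (T : measurableType d) (R : realType)
    (mu : {measure set T -> \bar R}) (P : probability T R) B :
  0 < mu setT < +oo -> mnormalize mu P B = mu B * ((fine (mu setT))^-1)%:E.
Proof.
by case/andP => mu_gt0 mu_lty; rewrite /mnormalize gt_eqF // lt_eqF.
Qed.

Lemma intensity_normalize (R : realType) n dO (Omega : measurableType dO)
    (P : probability Omega R) (Phi : Omega -> seq (Rn R n))
    (L : {measure set (Rn R n) -> \bar R}) :
  0 < L setT < +oo -> intensity_measure P Phi L -> forall B, measurable B ->
  \int[P]_w ((npoints B (Phi w))%:R)%:E = (fine (L setT))%:E * normalize L B.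
Proof.
move=> L_fin intensityL B mB; rewrite intensityL // /normalize /= mnormalizeE //.
by rewrite muleCA -EFinM divff ?mule1 // gt_eqF // fine_gt0.
Qed.

Theorem proposition3p7 (R : realType) (n : nat) (X : set (Rn R n))
  (Mf : set {measure set (Rn R n) -> \bar R})
  (S' : probability (Rn R n) R -> Rn R n -> R)
  (dO : measure_display) (Omega : measurableType dO) (P : probability Omega R)
  (Phi : Omega -> seq (Rn R n)) (L Q : {measure set (Rn R n) -> \bar R}) :
  measurable X -> bounded_Rn X ->
  (forall M, Mf M -> finite_nonzero_on X M) ->
  finite_point_process X Phi ->
  Mf L -> intensity_measure P Phi L ->
  Mf Q ->
  P.-integrable [set: Omega] (fun w => (Sc S' (normalize Q) (Phi w))%:E) ->
  P.-integrable [set: Omega] (fun w => (Sc S' (normalize L) (Phi w))%:E) ->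
  (consistent X Mf S' ->
     \int[P]_w (Sc S' (normalize Q) (Phi w))%:E
       >= \int[P]_w (Sc S' (normalize L) (Phi w))%:E) /\
  (strictly_consistent X Mf S' ->
     \int[P]_w (Sc S' (normalize Q) (Phi w))%:E
       = \int[P]_w (Sc S' (normalize L) (Phi w))%:E ->
     (normalize Q : set (Rn R n) -> \bar R) = normalize L).
Proof.
move=> mX _ Mf_fin [PhiX measurable_count] ML intensityL MQ _ _.
have [L_fin _] := Mf_fin L ML.
have L_gt0 : (0 < fine (L setT))%R by exact: fine_gt0.
have expected_score G : (normalize L).-integrable X (fun x => (S' G x)%:E) ->
    \int[P]_w (Sc S' G (Phi w))%:E =
    (fine (L setT))%:E * \int[normalize L]_(x in X) (S' G x)%:E.
  exact: campbell measurable_count (intensity_normalize L_fin intensityL)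
    _ _ mX PhiX.
have FL : Fcal Mf (normalize L) by exists L.
have FQ : Fcal Mf (normalize Q) by exists Q.
split=> [consistentS' | [consistentS' strictS'] eq_scores].
  have [[intQ le_score] [intL _]] :=
    (consistentS' _ _ FL FQ, consistentS' _ _ FL FL).
  rewrite (expected_score _ intQ) (expected_score _ intL).
  by rewrite lee_wpmul2l // lee_fin ltW.
have [[intQ _] [intL _]] := (consistentS' _ _ FL FQ, consistentS' _ _ FL FL).
apply: strictS' => //; move: eq_scores.
rewrite (expected_score _ intQ) (expected_score _ intL).
move/(congr1 (fun e => ((fine (L setT))^-1)%:E * e)).
by rewrite !muleA -EFinM mulVf ?gt_eqF // !mul1e.
Qed.
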